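(* Let $n$ and $r$ be integers such that $r\geq 3$ and $n\geq r(r-1)\big((r-1)(r-2)+1\big)$. If $(r^2-r)$ divides $n$ and an affine plane of order $r$ exists, then there exists a graph $G$ on $n$ vertices with $$\delta(G) = \left(1-\frac{r-2}{r^2-r}\right)n-2$$ such that $\mathrm{mc}_r(G)< \frac{n}{r-1}$.
   Context: An affine plane of order $q$ is a $q$-uniform hypergraph on $q^2$ vertices (points) with $q(q+1)$ edges (lines) such that each pair of distinct points lies in exactly one line. $\delta(G)$ denotes the minimum degree of $G$. An $r$-coloring of $G$ means a coloring of the edges of $G$ with $r$ colors. For a graph $G$ and a positive integer $r$, $\mathrm{mc}_r(G)$ is the largest integer $m$ such that in every $r$-coloring of the edges of $G$ there is a monochromatic component (a maximal connected subgraph all of whose edges have one color) with at least $m$ vertices. *)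

From mathcomp Require Import all_boot all_order all_algebra.
Set Implicit Arguments. Unset Strict Implicit. Unset Printing Implicit Defensive.

Definition simple_graph (n : nat) (G : rel 'I_n) : Prop :=
  symmetric G /\ irreflexive G.

(* degree of v and minimum degree delta(G) (n is the default for n = 0,
   irrelevant for our use since n > 0) *)
Definition degree (n : nat) (G : rel 'I_n) (v : 'I_n) : nat := #|[set u | G v u]|.
Definition min_degree (n : nat) (G : rel 'I_n) : nat :=
  \big[minn/n]_(v : 'I_n) degree G v.

(* An r-coloring of the edges: a colour for each ordered pair, required to be
   symmetric on edges (so it is really a colouring of the undirected edges;
   values on non-edges are irrelevant). *)
Definition coloring (n r : nat) := {ffun 'I_n * 'I_n -> 'I_r}.
Definition is_edge_coloring (n r : nat) (G : rel 'I_n) (c : coloring n r) : bool :=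
  [forall x, forall y, G x y ==> (c (x, y) == c (y, x))].

Definition color_rel (n r : nat) (G : rel 'I_n) (c : coloring n r) (i : 'I_r) : rel 'I_n :=
  fun x y => G x y && (c (x, y) == i).

Definition mono_comp (n r : nat) (G : rel 'I_n) (c : coloring n r) (i : 'I_r) (v : 'I_n)
  : {set 'I_n} := [set u | connect (color_rel G c i) v u].

Definition mc_prop (n r : nat) (G : rel 'I_n) (m : nat) : bool :=
  [forall c : coloring n r, is_edge_coloring G c ==>
     [exists i : 'I_r, exists v : 'I_n, m <= #|mono_comp G c i v|]].

Definition mc (r n : nat) (G : rel 'I_n) : nat :=
  \max_(m < n.+1 | mc_prop r G m) m.

Definition affine_plane (q : nat) (L : {set {set 'I_(q ^ 2)}}) : Prop :=
  [/\ #|L| = q * (q + 1),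
      forall l, l \in L -> #|l| = q
    & forall x y : 'I_(q ^ 2), x != y ->
        #|[set l in L | (x \in l) && (y \in l)]| = 1].

Definition affine_plane_exists (q : nat) : Prop :=
  exists L : {set {set 'I_(q ^ 2)}}, affine_plane L.

From mathcomp Require Import all_boot all_order all_algebra.
From mathcomp Require Import zify ring.
Set Implicit Arguments. Unset Strict Implicit. Unset Printing Implicit Defensive.

(* Blow up an affine plane of order r: give each point p a weight w p, replace it by
   w p vertices, and join two vertices unless they lie over distinct points of a common
   line of one fixed parallel class (that of V).  Colouring an edge by the direction of
   the line through its two points uses the r other parallel classes, and every
   monochromatic component stays inside the blow-up of one line, so mc_r is at most the
   largest line weight.  A vertex over p misses exactly the weight of the V-line through
   p other than p itself.  For n = r(r-1)k there is a weighting in which every line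
   weighs at most rk - 1 < n/(r-1) and, for every p of positive weight, the V-line
   through p without p weighs at most (r-2)k + 1, with equality for some p; the minimum
   degree is then exactly n - (r-2)k - 2. *)

Lemma sum_mem_card (T : finType) (A B : {set T}) : \sum_(p in A) (p \in B) = #|A :&: B|.
Proof.
rewrite -sum1_card big_mkcond [RHS]big_mkcond /=; apply: eq_bigr => p _.
by rewrite !inE; case: (p \in A); case: (p \in B).
Qed.

Lemma cardsD1_in (T : finType) (A : {set T}) x : x \in A -> #|A :\ x| = #|A|.-1.
Proof. by move=> xA; rewrite (cardsD1 x A) xA. Qed.

Lemma exists_fibration (T : finType) (x0 : T) (w : T -> nat) n : \sum_p w p = n ->
  exists f : 'I_n -> T, forall S : {set T}, #|f @^-1: S| = \sum_(p in S) w p.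
Proof.
move=> w_sum; set s := flatten [seq nseq (w p) p | p <- enum T].
have count_s (S : {set T}) : count (mem S) s = \sum_(p in S) w p.
  rewrite count_flatten -map_comp sumnE big_map big_enum /= [RHS]big_mkcond.
  apply: eq_bigr => p _; rewrite /= count_nseq -[mem S p]/(p \in S).
  by case: (p \in S); rewrite ?mul1n.
have size_s : size s = n.
  rewrite -w_sum -(eq_bigl _ _ (in_set (fun _ => true))) -count_s -count_predT.
  by apply: eq_count => p; rewrite /= inE.
case: n / size_s {w_sum}; exists (nth x0 s) => S.
rewrite -count_s -sum1_count (big_nth x0) big_mkord sum1dep_card.
by apply: eq_card => i; rewrite !inE.
Qed.

Lemma exists_ord_injection (T : finType) (S : {pred T}) m : 0 < #|S| <= m ->
  exists g : T -> 'I_m, {in S &, injective g}.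
Proof.
case/andP => /card_gt0P [x0 Sx0] Sm; exists (widen_ord Sm \o enum_rank_in Sx0).
move=> x y xS yS /(congr1 val) /= /val_inj.
exact: (can_in_inj (enum_rankK_in Sx0)).
Qed.

Lemma exists_three_distinct (T : finType) (S : {set T}) : 2 < #|S| ->
  exists a b c, [/\ a \in S, b \in S :\ a & c \in S :\ a :\ b].
Proof.
move=> S_gt2; have [a aS] : exists a, a \in S by apply/card_gt0P; lia.
have [b bS] : exists b, b \in S :\ a.
  by apply/card_gt0P; move: S_gt2; rewrite (cardsD1 a S) aS /=; lia.
have [c cS] : exists c, c \in S :\ a :\ b.
  apply/card_gt0P; move: S_gt2.
  by rewrite (cardsD1 a S) (cardsD1 b (S :\ a)) aS bS /=; lia.
by exists a, b, c.
Qed.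

Section AffinePlane.

Variable r : nat.
Hypothesis r_gt1 : 1 < r.
Local Notation point := 'I_(r ^ 2).
Variable L : {set {set point}}.
Hypothesis card_line : forall l, l \in L -> #|l| = r.
Hypothesis unique_line : forall x y : point, x != y ->
  #|[set l in L | (x \in l) && (y \in l)]| = 1.

Lemma line_eq x y l1 l2 : x != y -> l1 \in L -> l2 \in L ->
  x \in l1 -> y \in l1 -> x \in l2 -> y \in l2 -> l1 = l2.
Proof.
move=> xy L1 L2 x1 y1 x2 y2; have /eqP/cards1P [l0 e] := unique_line xy.
have : l1 \in [set l in L | (x \in l) && (y \in l)] by rewrite !inE L1 x1 y1.
have : l2 \in [set l in L | (x \in l) && (y \in l)] by rewrite !inE L2 x2 y2.
by rewrite e !inE => /eqP -> /eqP ->.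
Qed.

Lemma lines_meet_once l1 l2 x y : l1 \in L -> l2 \in L -> l1 != l2 ->
  x \in l1 -> x \in l2 -> y \in l1 -> y \in l2 -> x = y.
Proof.
move=> L1 L2 l12 x1 x2 y1 y2; apply/eqP/negPn/negP => xy.
by move/eqP: l12; apply; apply: (line_eq xy).
Qed.

Lemma card_line_D1 l x : l \in L -> x \in l -> #|l :\ x| = r.-1.
Proof. by move=> Ll xl; rewrite cardsD1_in ?card_line. Qed.

Definition join (x y : point) : {set point} :=
  odflt set0 [pick l in L | (x \in l) && (y \in l)].

Lemma joinP x y : x != y -> [/\ join x y \in L, x \in join x y & y \in join x y].
Proof.
rewrite /join => xy; case: pickP => [l /andP [-> /andP [-> ->]] //| no_line].
have := unique_line xy; rewrite (_ : [set l in L | _] = set0) ?cards0 //.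
by apply/setP => l; rewrite !inE no_line.
Qed.

Lemma joinC x y : join x y = join y x.
Proof.
have [-> // | xy] := eqVneq x y; have yx := xy; rewrite eq_sym in yx.
have [Lxy xxy yxy] := joinP xy; have [Lyx yyx xyx] := joinP yx.
exact: (line_eq xy).
Qed.

Lemma card_lines_through x : #|[set l in L | x \in l]| = r.+1.
Proof.
set S := [set l in L | x \in l].
have lines_cover : \sum_(l in S) #|l :\ x| = #|[set~ x]|.
  rewrite -sum1_card (eq_bigr (fun l => \sum_(y in l :\ x) 1)) => [|l _]; last first.
    by rewrite sum1_card.
  rewrite (exchange_big_dep (mem [set~ x])) /= => [|l y _]; last first.
    by rewrite !inE => /andP [].
  apply: eq_bigr => y; rewrite !inE => yx.
  rewrite sum1dep_card -[RHS](unique_line yx); apply: eq_card => l.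
  by rewrite !inE yx /= -andbA (andbC (x \in l)).
have line_minus_x l : l \in S -> #|l :\ x| = r.-1.
  by rewrite inE => /andP [Ll xl]; rewrite card_line_D1.
rewrite (eq_bigr _ line_minus_x) sum_nat_const cardsC1 card_ord in lines_cover.
have : #|S| * r.-1 = r.+1 * r.-1 by rewrite lines_cover; nia.
by move/eqP; rewrite eqn_pmul2r -?subn1 ?subn_gt0 // => /eqP.
Qed.

Definition parallel (l m : {set point}) := (l == m) || [disjoint l & m].

Lemma parallel_refl l : parallel l l.
Proof. by rewrite /parallel eqxx. Qed.

Lemma parallel_sym l m : parallel l m = parallel m l.
Proof. by rewrite /parallel eq_sym disjoint_sym. Qed.

Lemma parallel_eq (l m : {set point}) x : parallel l m -> x \in l -> x \in m -> l = m.
Proof.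
case/orP => [/eqP // | /disjointFr lm] xl xm.
by have := lm _ xl; rewrite xm.
Qed.

Lemma meet_not_parallel (l m : {set point}) x :
  l != m -> x \in l -> x \in m -> ~~ parallel l m.
Proof. by move=> lm xl xm; apply/negP => /parallel_eq/(_ xl xm)/eqP; apply/negP. Qed.

Lemma not_parallel_meet (l m : {set point}) : ~~ parallel l m -> exists2 x, x \in l & x \in m.
Proof. by rewrite negb_or => /andP [_ /pred0Pn [x /andP [xl xm]]]; exists x. Qed.

Lemma playfair x l : l \in L -> x \notin l ->
  #|[set m in L | (x \in m) && [disjoint m & l]]| = 1.
Proof.
move=> Ll xl; set S := [set m in L | x \in m].
have x_off y : y \in l -> x != y by move=> yl; apply: contraNneq xl => ->.
have meeting : [set m in S | ~~ [disjoint m & l]] = join x @: l.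
  apply/setP => m; rewrite !inE; apply/idP/imsetP.
    case/andP => /andP [Lm xm] /pred0Pn [y /andP [ym yl]]; exists y => //.
    by have [Lj xj yj] := joinP (x_off y yl); apply: (line_eq (x_off y yl)).
  case=> y yl ->; have [Lj xj yj] := joinP (x_off y yl).
  by rewrite Lj xj; apply/pred0Pn; exists y; rewrite /= yj.
have card_meeting : #|[set m in S | ~~ [disjoint m & l]]| = r.
  rewrite meeting card_in_imset ?card_line // => y z yl zl jyz.
  have [Ly xy yy] := joinP (x_off y yl); have [Lz xz zz] := joinP (x_off z zl).
  apply: (lines_meet_once Ly Ll) => //; last by rewrite jyz.
  by apply: contraNneq xl => <-.
have := cardsID [set m in S | ~~ [disjoint m & l]] S.
rewrite card_lines_through (_ : S :&: _ = [set m in S | ~~ [disjoint m & l]]); last first.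
  by apply/setP => m; rewrite !inE andbA andbb.
rewrite card_meeting.
rewrite (_ : S :\: _ = [set m in L | (x \in m) && [disjoint m & l]]); last first.
  by apply/setP => m; rewrite !inE; case: (m \in L); case: (x \in m); case: [disjoint m & l].
lia.
Qed.

Definition par (x : point) (l : {set point}) : {set point} :=
  odflt l [pick m in L | (x \in m) && parallel m l].

Lemma parP x l : l \in L -> [/\ par x l \in L, x \in par x l & parallel (par x l) l].
Proof.
rewrite /par => Ll; case: pickP => [m /andP [-> /andP [-> ->]] // | no_par].
have [xl | xl] := boolP (x \in l); first by have := no_par l; rewrite Ll xl parallel_refl.
have := playfair Ll xl; rewrite (_ : [set m in L | _] = set0) ?cards0 //.
apply/setP => m; rewrite !inE; have := no_par m; rewrite /= /parallel.
by case: (m \in L); case: (x \in m); case: (m == l); case: [disjoint m & l].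
Qed.

Lemma par_uniq x l m : l \in L -> m \in L -> x \in m -> parallel m l -> m = par x l.
Proof.
move=> Ll Lm xm ml; have [Lp xp pl] := parP x Ll.
have [xl | xl] := boolP (x \in l).
  by rewrite (parallel_eq ml xm xl) (parallel_eq pl xp xl).
have /eqP/cards1P [m0 e] := playfair Ll xl.
have disj (m' : {set point}) : x \in m' -> parallel m' l -> [disjoint m' & l].
  by move=> xm' /orP [/eqP ml' | //]; move: xl; rewrite -ml' xm'.
have : m \in [set m in L | (x \in m) && [disjoint m & l]] by rewrite !inE Lm xm disj.
have : par x l \in [set m in L | (x \in m) && [disjoint m & l]] by rewrite !inE Lp xp disj.
by rewrite e !inE => /eqP -> /eqP ->.
Qed.

Lemma par_id x l : l \in L -> x \in l -> par x l = l.
Proof. by move=> Ll xl; rewrite -(par_uniq Ll Ll xl (parallel_refl l)). Qed.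

Lemma parallel_trans l m n : l \in L -> m \in L -> n \in L ->
  parallel l m -> parallel m n -> parallel l n.
Proof.
move=> Ll Lm Ln lm mn; rewrite /parallel; have [//|ln /=] := eqVneq l n.
apply/pred0Pn => -[x /andP [xl xn]]; move/eqP: ln; apply.
have [xm | xm] := boolP (x \in m).
  by rewrite (parallel_eq lm xl xm) (parallel_eq mn xm xn).
by rewrite (par_uniq Lm Ll xl lm) (par_uniq Lm Ln xn) // parallel_sym.
Qed.

Lemma par_eq x y l : l \in L -> y \in par x l -> par y l = par x l.
Proof. by move=> Ll yx; have [Lp _ pl] := parP x Ll; rewrite (par_uniq Ll Lp yx pl). Qed.

Lemma mem_par_sym x y l : l \in L -> (y \in par x l) = (x \in par y l).
Proof.
move=> Ll; apply/idP/idP => [yx | xy].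
  by rewrite (par_eq Ll yx); case: (parP x Ll).
by rewrite (par_eq Ll xy); case: (parP y Ll).
Qed.

Lemma parallel_notin (l m : {set point}) x y :
  parallel l m -> x \in l -> x \notin m -> y \in l -> y \notin m.
Proof. by move=> lm xl xm yl; apply: contra xm => ym; rewrite -(parallel_eq lm yl ym). Qed.

Lemma card_meet_le1 l m : l \in L -> m \in L -> l != m -> #|l :&: m| <= 1.
Proof.
move=> Ll Lm lm; apply/card_le1_eqP => x y; rewrite !inE => /andP [xl xm] /andP [yl ym].
exact: (lines_meet_once Ll Lm lm).
Qed.

Lemma exists_point_off l m x : 2 < r -> l \in L -> m \in L -> l != m ->
  exists y, [/\ y \in l, y != x & y \notin m].
Proof.
move=> r_gt2 Ll Lm lm; have : 0 < #|l :\: m :\ x|.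
  have := cardsID m l; have := cardsD1 x (l :\: m); have := card_meet_le1 Ll Lm lm.
  by rewrite (card_line Ll); case: (x \in l :\: m) => /=; lia.
by case/card_gt0P => y; rewrite !inE => /and3P [yx ym yl]; exists y.
Qed.

Section BlowUp.

Variables (V : {set point}) (w : point -> nat) (n : nat) (f : 'I_n -> point).
Hypotheses (V_line : V \in L)
  (card_fibre : forall S : {set point}, #|f @^-1: S| = \sum_(p in S) w p).

Definition blowup : rel 'I_n :=
  fun u v => (u != v) && ((f u == f v) || (f v \notin par (f u) V)).

Lemma blowup_simple : simple_graph blowup.
Proof.
split=> [u v | u]; last by rewrite /blowup eqxx.
by rewrite /blowup eq_sym (eq_sym (f u)) mem_par_sym.
Qed.

Lemma weight_gt0P p : reflect (exists u, f u = p) (0 < w p).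
Proof.
have := card_fibre [set p]; rewrite big_set1 => <-.
apply: (iffP card_gt0P) => [[u] | [u <-]]; last by exists u; rewrite !inE.
by rewrite !inE => /eqP <-; exists u.
Qed.

Lemma degree_blowup u : degree blowup u = n.-1 - \sum_(q in par (f u) V :\ f u) w q.
Proof.
have u_out : f @^-1: (par (f u) V :\ f u) \subset [set~ u].
  by apply/subsetP => v; rewrite !inE; apply: contraTneq => ->; rewrite eqxx.
rewrite /degree -card_fibre -[n in n.-1](card_ord n) -(cardsC1 u) -(setIidPr u_out) -cardsD.
apply: eq_card => v; rewrite !inE /blowup eq_sym [f v == _]eq_sym.
by case: (v != u); case: (f u == f v); case: (f v \in _).
Qed.

Lemma min_degree_blowup d :
    (forall p, 0 < w p -> \sum_(q in par p V :\ p) w q <= d) ->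
    (exists2 p, 0 < w p & \sum_(q in par p V :\ p) w q = d) ->
  min_degree blowup = n.-1 - d.
Proof.
move=> le_d [p /weight_gt0P [u0 <-] eq_d]; apply/eqP; rewrite eqn_leq; apply/andP; split.
  rewrite /min_degree -minEnat -eq_d -degree_blowup.
  by rewrite -leEnat Order.TotalTheory.bigmin_le.
rewrite /min_degree -minEnat -leEnat.
apply: Order.POrderTheory.le_bigmin => [|u _]; rewrite leEnat.
  by rewrite (leq_trans (leq_subr _ _)) ?leq_pred.
rewrite degree_blowup leq_sub2l // le_d //; apply/weight_gt0P; by exists u.
Qed.

Variable x0 : point.

Definition color_lines : {set {set point}} := [set l in L | x0 \in l] :\ par x0 V.

Lemma card_color_lines : #|color_lines| = r.
Proof.
have [LV x0V _] := parP x0 V_line.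
have := cardsD1 (par x0 V) [set l in L | x0 \in l].
by rewrite card_lines_through !inE LV x0V add1n => -[<-].
Qed.

Variable g : {set point} -> 'I_r.
Hypothesis g_inj : {in color_lines &, injective g}.

(* An edge inside a fibre gets an arbitrary colour ([join p p] is just some line
   through p); such an edge never leaves the blow-up of a line. *)
Definition blowup_coloring : coloring n r :=
  [ffun e => g (par x0 (join (f e.1) (f e.2)))].

Lemma blowup_coloring_edge : is_edge_coloring blowup blowup_coloring.
Proof.
by apply/forallP => u; apply/forallP => v; apply/implyP => _; rewrite !ffunE /= joinC.
Qed.

Definition color_line (i : 'I_r) : {set point} :=
  odflt V [pick l in color_lines | g l == i].

Lemma color_lineL i : color_line i \in L.
Proof.
rewrite /color_line; case: pickP => [l /andP [] | _] //=.
by rewrite !inE => /andP [_ /andP []].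
Qed.

Lemma color_rel_blowup i u v : color_rel blowup blowup_coloring i u v ->
  par (f u) (color_line i) = par (f v) (color_line i).
Proof.
rewrite /color_rel ffunE /= => /andP [/andP [_ uv] /eqP col].
have [-> // | fuv] := eqVneq (f u) (f v); rewrite (negbTE fuv) /= in uv.
set l := join (f u) (f v) in col; have [Ll ul vl] := joinP fuv.
have lV : ~~ parallel l V.
  by move: uv; apply: contraNN => lV; rewrite -(par_uniq V_line Ll ul lV).
have [Ld x0d dl] := parP x0 Ll.
have d_class : par x0 l \in color_lines.
  rewrite !inE Ld x0d /= andbT; move: lV; apply: contraNN => /eqP dV.
  have [LV _ V'V] := parP x0 V_line.
  by apply: (parallel_trans Ll LV V_line) => //; rewrite -dV parallel_sym.
have -> : color_line i = par x0 l.
  rewrite /color_line; case: pickP => [l' /andP [l'_class /eqP gl'] | no_class] /=.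
    by apply: g_inj => //; rewrite gl'.
  by have := no_class (par x0 l); rewrite d_class col eqxx.
rewrite parallel_sym in dl.
by rewrite -(par_uniq Ld Ll ul dl) -(par_uniq Ld Ll vl dl).
Qed.

Lemma mono_comp_blowup i v :
  mono_comp blowup blowup_coloring i v \subset f @^-1: par (f v) (color_line i).
Proof.
have closed_par : closed (color_rel blowup blowup_coloring i)
    [pred u | par (f u) (color_line i) == par (f v) (color_line i)].
  by move=> x y /color_rel_blowup exy; rewrite !inE /= exy.
apply/subsetP => u; rewrite !inE => /(closed_connect closed_par); rewrite !inE /= eqxx.
have [_ uu _] := parP (f u) (color_lineL i).
by move=> /esym /eqP <-.
Qed.

Lemma mc_blowup m : (forall l, l \in L -> \sum_(p in l) w p <= m) -> mc r blowup <= m.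
Proof.
move=> le_m; apply/bigmax_leqP => m' /forallP /(_ blowup_coloring).
rewrite blowup_coloring_edge => /existsP [i /existsP [v /leq_trans]]; apply.
rewrite (leq_trans (subset_leq_card (mono_comp_blowup i v))) // card_fibre le_m //.
by case: (parP (f v) (color_lineL i)).
Qed.

End BlowUp.

Lemma exists_blowup (V : {set point}) (w : point -> nat) n m d : V \in L ->
    \sum_p w p = n -> (forall l, l \in L -> \sum_(p in l) w p <= m) ->
    (forall p, 0 < w p -> \sum_(q in par p V :\ p) w q <= d) ->
    (exists2 p, 0 < w p & \sum_(q in par p V :\ p) w q = d) ->
  exists G : rel 'I_n, [/\ simple_graph G, min_degree G = n.-1 - d & mc r G <= m].
Proof.
move=> V_line w_sum le_m le_d [x0 x0_pos eq_d].
have [f card_fibre] := exists_fibration x0 w_sum.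
have [g g_inj] : exists g : {set point} -> 'I_r, {in color_lines V x0 &, injective g}.
  by apply: exists_ord_injection; rewrite card_color_lines // leqnn andbT ltnW.
exists (blowup V f); split; first exact: blowup_simple.
  by apply: min_degree_blowup => //; exists x0.
exact: (mc_blowup V_line card_fibre g_inj le_m).
Qed.

Section Weighting.

Hypothesis r_gt2 : 2 < r.
Variable k : nat.
Hypothesis r_le_k : r <= k.

Variables (o z p1 p0 : point) (A V Y : {set point}).
Local Notation Az := (par z A).
Local Notation Bz := (par z Y).
Local Notation Ap := (par p1 A).
Hypotheses (A_line : A \in L) (V_line : V \in L) (Y_line : Y \in L).
Hypotheses (o_A : o \in A) (o_V : o \in V) (o_Y : o \in Y).
Hypotheses (A_V : A != V) (A_Y : A != Y) (V_Y : V != Y).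
Hypotheses (z_V : z \in V) (z_o : z != o).
Hypotheses (p1_Y : p1 \in Y) (p1_o : p1 != o) (p1_Az : p1 \notin Az).
Hypotheses (p0_V : p0 \in V) (p0_Ap : p0 \in Ap).

Let A_V_meet x : x \in A -> x \in V -> x = o.
Proof. by move=> xA xV; apply: (lines_meet_once A_line V_line A_V). Qed.
Let A_Y_meet x : x \in A -> x \in Y -> x = o.
Proof. by move=> xA xY; apply: (lines_meet_once A_line Y_line A_Y). Qed.
Let V_Y_meet x : x \in V -> x \in Y -> x = o.
Proof. by move=> xV xY; apply: (lines_meet_once V_line Y_line V_Y). Qed.
Let A_V_npar : ~~ parallel A V. Proof. exact: meet_not_parallel A_V o_A o_V. Qed.
Let A_Y_npar : ~~ parallel A Y. Proof. exact: meet_not_parallel A_Y o_A o_Y. Qed.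
Let V_Y_npar : ~~ parallel V Y. Proof. exact: meet_not_parallel V_Y o_V o_Y. Qed.
Let z_A : z \notin A. Proof. by apply: contra z_o => zA; rewrite (A_V_meet zA z_V). Qed.

Let Az_line : Az \in L. Proof. by case: (parP z A_line). Qed.
Let z_Az : z \in Az. Proof. by case: (parP z A_line). Qed.
Let Az_par_A : parallel Az A. Proof. by case: (parP z A_line). Qed.
Let Az_A x : x \in Az -> x \notin A. Proof. exact: parallel_notin Az_par_A z_Az z_A. Qed.
Let o_Az : o \notin Az. Proof. by apply: contraL o_A; apply: Az_A. Qed.
Let V_Az_meet x : x \in V -> x \in Az -> x = z.
Proof.
move=> xV xAz; apply: (lines_meet_once V_line Az_line _ xV xAz z_V z_Az).
by apply: contraNneq o_Az => <-.
Qed.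

Let Bz_line : Bz \in L. Proof. by case: (parP z Y_line). Qed.
Let z_Bz : z \in Bz. Proof. by case: (parP z Y_line). Qed.
Let Bz_par_Y : parallel Bz Y. Proof. by case: (parP z Y_line). Qed.
Let o_Bz : o \notin Bz.
Proof.
apply/negP => oBz; move/eqP: z_o; apply; apply: V_Y_meet => //.
by rewrite -(parallel_eq Bz_par_Y oBz o_Y).
Qed.
Let Bz_npar l : l \in L -> ~~ parallel l Y -> ~~ parallel Bz l.
Proof.
move=> Ll; apply: contra => Bz_l; apply: (parallel_trans Ll Bz_line Y_line) => //.
by rewrite parallel_sym.
Qed.
Let Bz_meet l x : l \in L -> ~~ parallel l Y -> z \in l -> x \in Bz -> x \in l -> x = z.
Proof.
move=> Ll lY zl xBz xl; have Bz_l : Bz != l.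
  by apply: contraNneq (Bz_npar Ll lY) => ->; rewrite parallel_refl.
exact: (lines_meet_once Bz_line Ll Bz_l xBz xl z_Bz zl).
Qed.
Let p1_Bz : p1 \notin Bz.
Proof. by apply: (parallel_notin _ o_Y o_Bz p1_Y); rewrite parallel_sym. Qed.
Let p1_V : p1 \notin V. Proof. by apply: contra p1_o => p1V; rewrite (V_Y_meet p1V p1_Y). Qed.
Let p1_A : p1 \notin A. Proof. by apply: contra p1_o => p1A; rewrite (A_Y_meet p1A p1_Y). Qed.

Let Ap_line : Ap \in L. Proof. by case: (parP p1 A_line). Qed.
Let p1_Ap : p1 \in Ap. Proof. by case: (parP p1 A_line). Qed.
Let Ap_par_A : parallel Ap A. Proof. by case: (parP p1 A_line). Qed.
Let Ap_A x : x \in Ap -> x \notin A. Proof. exact: parallel_notin Ap_par_A p1_Ap p1_A. Qed.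
Let Ap_Az x : x \in Ap -> x \notin Az.
Proof.
apply: parallel_notin p1_Ap p1_Az; apply: (parallel_trans Ap_line A_line Az_line) => //.
by rewrite parallel_sym.
Qed.
Let Ap_eq l : l \in L -> p0 \in l -> parallel l A -> l = Ap.
Proof.
by move=> Ll p0l lA; rewrite (par_uniq A_line Ll p0l lA) (par_uniq A_line Ap_line p0_Ap).
Qed.
Let p0_A : p0 \notin A. Proof. exact: Ap_A. Qed.
Let p0_Az : p0 \notin Az. Proof. exact: Ap_Az. Qed.
Let p0_o : p0 != o. Proof. by apply: contraNneq p0_A => ->. Qed.
Let p0_z : p0 != z. Proof. by apply: contraNneq p0_Az => ->. Qed.
Let p0_p1 : p0 != p1. Proof. by apply: contraNneq p1_V => <-. Qed.
Let p0_Bz : p0 \notin Bz.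
Proof. by apply: contra p0_z => p0Bz; rewrite (Bz_meet V_line V_Y_npar z_V p0Bz). Qed.

(* Start from weight k everywhere.  The points of A other than o, and z, get weight 0;
   the points of the A-parallel Az through z, and p0, gain 1; o, p1 and the Y-parallel
   Bz through z lose 1.  Every A-parallel other than A then weighs at most rk - 1 (for
   Az this is where r <= k is needed), and V minus o weighs exactly (r-2)k + 1. *)
Definition void : {set point} := z |: (A :\ o).
Definition raised : {set point} := p0 |: Az.
Definition lowered : {set point} := o |: (p1 |: Bz).

Definition weight (p : point) : nat :=
  if p \in void then 0 else k + (p \in raised) - (p \in lowered).

Let k_gt0 : 0 < k. Proof. by apply: leq_trans r_le_k; apply: ltnW (ltnW _). Qed.

Lemma weight_le p : weight p <= k + (p \in raised :\: void).
Proof. by rewrite /weight in_setD; case: (p \in void) => //=; apply: leq_subr. Qed.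

Lemma weight_lowered p : p \notin void -> weight p + (p \in lowered) = k + (p \in raised).
Proof.
rewrite /weight => /negbTE ->.
by case: (p \in raised); case: (p \in lowered); rewrite /= ?addn0 ?subn0 ?addnK ?subnK.
Qed.

Lemma line_weight_void l v : l \in L -> v \in l -> v \in void ->
  \sum_(p in l) weight p <= r * k - 1.
Proof.
move=> Ll vl v_void.
rewrite (big_setD1 v vl) /= {1}/weight v_void add0n.
apply: (@leq_trans (\sum_(p in l :\ v) k.+1)).
  by apply: leq_sum => p _; rewrite (leq_trans (weight_le p)) // -[k.+1]addn1 leq_add2l leq_b1.
by rewrite sum_nat_const card_line_D1 //; move: r_le_k; clear; nia.
Qed.

Lemma line_weight_live l : l \in L -> [disjoint l & void] ->
  \sum_(p in l) weight p + #|l :&: lowered| = r * k + #|l :&: raised|.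
Proof.
move=> Ll l_live; rewrite -!sum_mem_card -big_split /=.
rewrite (eq_bigr (fun p => k + (p \in raised))) => [|p pl]; last first.
  by apply: weight_lowered; rewrite (disjointFr l_live pl).
by rewrite big_split /= sum_nat_const card_line // mulnC.
Qed.

Lemma raised_lt_lowered_par l : l \in L -> [disjoint l & void] -> parallel l A ->
  #|l :&: raised| < #|l :&: lowered|.
Proof.
move=> Ll l_live lA.
have l_Az x : x \in l -> x \notin Az.
  move=> xl; apply/negP => xAz; have l_Az : parallel l Az.
    by apply: (parallel_trans Ll A_line Az_line) => //; rewrite parallel_sym.
  have zl : z \in l by rewrite (parallel_eq l_Az xl xAz).
  by move: (disjointFr l_live zl); rewrite /void !inE eqxx.
have [b bBz bl] : exists2 b, b \in Bz & b \in l.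
  apply: not_parallel_meet; apply: Bz_npar => //; apply: contra A_Y_npar => lY.
  by apply: (parallel_trans A_line Ll Y_line) => //; rewrite parallel_sym.
have b_lowered : b \in l :&: lowered by rewrite !inE bl bBz !orbT.
have [p0l | p0l] := boolP (p0 \in l).
  have b_p1 : b != p1 by apply: contraNneq p1_Bz => <-.
  apply: (@leq_ltn_trans 1).
    apply/card_le1_eqP => x y; rewrite !inE.
    case/andP => /l_Az/negPf -> /orP [/eqP -> | //].
    by case/andP => /l_Az/negPf -> /orP [/eqP ->|].
  apply/card_gt1P; exists b, p1; split=> //.
  by rewrite !inE (Ap_eq Ll p0l lA) p1_Ap eqxx !orbT.
rewrite (_ : l :&: raised = set0) ?cards0; first by apply/card_gt0P; exists b.
apply/setP => x; rewrite !inE; apply/negP => /andP [xl /orP [/eqP x_p0 | xAz]].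
  by move: p0l; rewrite -x_p0 xl.
by move: (l_Az x xl); rewrite xAz.
Qed.

Lemma raised_lt_lowered_npar l : l \in L -> [disjoint l & void] -> ~~ parallel l A ->
  #|l :&: raised| < #|l :&: lowered|.
Proof.
move=> Ll l_live lA; have live x : x \in l -> x \notin void by move/(disjointFr l_live)->.
have o_l : o \in l.
  have [a al aA] := not_parallel_meet lA.
  by move: (live a al); rewrite !inE aA andbT => /norP [_ /negPn /eqP <-].
have p0_l : p0 \notin l.
  apply/negP => p0l; have z_l : z \in l by rewrite (line_eq p0_o Ll V_line p0l o_l p0_V o_V).
  by move: (live z z_l); rewrite !inE eqxx.
have l_Az : l != Az by apply: contraNneq o_Az => <-.
have raised_le1 : #|l :&: raised| <= 1.
  apply: leq_trans (card_meet_le1 Ll Az_line l_Az); apply: subset_leq_card.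
  apply/subsetP => x; rewrite !inE => /andP [xl /orP [/eqP x_p0 | xAz]]; last by rewrite xl.
  by move: p0_l; rewrite -x_p0 xl.
apply: leq_ltn_trans raised_le1 _; apply/card_gt1P.
have [lY | lY] := boolP (parallel l Y).
  have l_Y : l = Y := parallel_eq lY o_l o_Y.
  by exists o, p1; rewrite !inE !eqxx o_l l_Y p1_Y (eq_sym o p1) p1_o /= ?orbT.
have [b bBz bl] := not_parallel_meet (Bz_npar Ll lY).
have b_o : b != o by apply: contraNneq o_Bz => <-.
by exists o, b; rewrite !inE !eqxx o_l bl bBz (eq_sym o b) b_o /= ?orbT.
Qed.

Lemma line_weight_le l : l \in L -> \sum_(p in l) weight p <= r * k - 1.
Proof.
move=> Ll; have [l_live | /pred0Pn [v /andP [vl v_void]]] := boolP [disjoint l & void].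
  have raised_lt : #|l :&: raised| < #|l :&: lowered|.
    have [lA | lA] := boolP (parallel l A).
      exact: raised_lt_lowered_par.
    exact: raised_lt_lowered_npar.
  move: (line_weight_live Ll l_live) raised_lt; clear; lia.
exact: line_weight_void vl v_void.
Qed.

Let V_par_A l : l \in L -> parallel l V -> ~~ parallel l A.
Proof.
move=> Ll lV; apply: contra A_V_npar => lA.
by apply: (parallel_trans A_line Ll V_line) => //; rewrite parallel_sym.
Qed.

Lemma par_V_void p : exists2 v, v \in par p V & v \in void.
Proof.
have [l_line p_l lV] := parP p V_line.
have [l_V | l_V] := eqVneq (par p V) V; first by exists z; rewrite ?l_V // !inE eqxx.
have [a al aA] := not_parallel_meet (V_par_A l_line lV).
exists a; rewrite // !inE aA andbT; apply/orP; right.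
by apply: contra_neq l_V => a_o; apply: (parallel_eq lV al); rewrite a_o.
Qed.

Lemma card_par_V_raised l : l \in L -> parallel l V -> #|l :&: (raised :\: void)| <= 1.
Proof.
move=> Ll lV; have [-> {l Ll lV} | l_V] := eqVneq l V.
  apply: (@leq_trans #|[set p0]|); last by rewrite cards1.
  apply: subset_leq_card; apply/subsetP => x.
  rewrite !inE => /and3P [xV /norP [x_z _] /orP [] //].
  by move=> xAz; move: x_z; rewrite (V_Az_meet xV xAz) eqxx.
have p0_l : p0 \notin l by apply: contra l_V => p0l; rewrite (parallel_eq lV p0l p0_V).
have l_Az : l != Az by apply: contraNneq (V_par_A Ll lV) => ->.
apply: leq_trans (card_meet_le1 Ll Az_line l_Az); apply: subset_leq_card.
apply/subsetP => x; rewrite !inE => /and3P [xl _ /orP [/eqP x_p0 | xAz]]; last by rewrite xl.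
by move: p0_l; rewrite -x_p0 xl.
Qed.

Lemma par_V_weight_le p : p \notin void ->
  \sum_(q in par p V :\ p) weight q <= (r - 2) * k + 1.
Proof.
move=> p_live; have [l_line p_l lV] := parP p V_line; set l := par p V in l_line p_l lV *.
have [v vl v_void] := par_V_void p.
have v_lp : v \in l :\ p by rewrite !inE vl andbT; apply: contraNneq p_live => <-.
rewrite (big_setD1 v v_lp) /= {1}/weight v_void add0n.
apply: (@leq_trans (\sum_(q in l :\ p :\ v) (k + (q \in raised :\: void)))).
  by apply: leq_sum => q _; apply: weight_le.
rewrite big_split /= sum_nat_const sum_mem_card.
have -> : #|l :\ p :\ v| = r - 2.
  by rewrite cardsD1_in // card_line_D1 // -!subn1 -subnDA.
rewrite mulnC leq_add2l; apply: leq_trans (card_par_V_raised l_line lV).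
by apply/subset_leq_card/setSI; apply: subset_trans (subD1set _ v) (subD1set _ p).
Qed.

Lemma weight_o : weight o = k.-1.
Proof.
rewrite /weight !inE !eqxx (eq_sym o z) (negbTE z_o) (eq_sym o p0) (negbTE p0_o).
by rewrite (negbTE o_Az) /= addn0 subn1.
Qed.

Lemma V_weight : \sum_(q in V :\ o) weight q = (r - 2) * k + 1.
Proof.
have z_Vo : z \in V :\ o by rewrite !inE z_o z_V.
have p0_Voz : p0 \in V :\ o :\ z by rewrite !inE p0_z p0_o p0_V.
have weight_z : weight z = 0 by rewrite /weight !inE eqxx.
have weight_p0 : weight p0 = k.+1.
  rewrite /weight !inE !eqxx (negbTE p0_z) (negbTE p0_A) (negbTE p0_o) (negbTE p0_p1).
  by rewrite (negbTE p0_Bz) andbF /= addn1 subn0.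
have weight_rest q : q \in V :\ o :\ z :\ p0 -> weight q = k.
  rewrite !inE => /and4P [q_p0 q_z q_o qV].
  have qA : q \notin A by apply: contra q_o => qA; rewrite (A_V_meet qA qV).
  have qAz : q \notin Az by apply: contra q_z => qAz; rewrite (V_Az_meet qV qAz).
  have qBz : q \notin Bz.
    by apply: contra q_z => qBz; rewrite (Bz_meet V_line V_Y_npar z_V qBz qV).
  have q_p1 : q != p1 by apply: contraNneq p1_V => <-.
  rewrite /weight !inE (negbTE q_z) (negbTE qA) (negbTE q_p0) (negbTE qAz) (negbTE q_o).
  by rewrite (negbTE q_p1) (negbTE qBz) andbF /= addn0 subn0.
have card_rest : #|V :\ o :\ z :\ p0| = r - 3.
  by rewrite !cardsD1_in // card_line // -!subn1 -!subnDA.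
rewrite (big_setD1 z z_Vo) (big_setD1 p0 p0_Voz) /= weight_z weight_p0.
by rewrite (eq_bigr _ weight_rest) sum_nat_const card_rest; move: r_gt2; clear; nia.
Qed.

Lemma card_void : #|void| = r.
Proof.
rewrite cardsU1 !inE (negbTE z_A) andbF card_line_D1 // add1n prednK //.
exact: ltnW (ltnW r_gt2).
Qed.

Lemma card_live_raised : #|~: void :&: raised| = r.
Proof.
have -> : ~: void :&: raised = p0 |: (Az :\ z).
  apply/setP => x; rewrite !inE; have [-> | x_p0] /= := eqVneq x p0.
    by rewrite (negbTE p0_z) (negbTE p0_A) andbF.
  have [xAz | xAz] := boolP (x \in Az); last by rewrite !andbF.
  by rewrite (negbTE (Az_A xAz)) andbF orbF !andbT.
rewrite cardsU1 !inE (negbTE p0_Az) andbF card_line_D1 // add1n prednK //.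
exact: ltnW (ltnW r_gt2).
Qed.

Lemma card_live_lowered : #|~: void :&: lowered| = r.
Proof.
have [b bBz bA] := not_parallel_meet (Bz_npar A_line A_Y_npar).
have b_z : b != z by apply: contraNneq z_A => <-.
have Bz_A x : x \in Bz -> (x \in A) = (x == b).
  move=> xBz; apply/idP/eqP => [xA | ->] //; apply: (lines_meet_once Bz_line A_line) => //.
  by apply: contraNneq (Bz_npar A_line A_Y_npar) => ->; rewrite parallel_refl.
have p1_z : p1 != z.
  by apply: contraNneq z_o => p1z; rewrite (V_Y_meet z_V) // -p1z.
have -> : ~: void :&: lowered = o |: (p1 |: (Bz :\ z :\ b)).
  apply/setP => x; rewrite !inE; have [-> | x_o] /= := eqVneq x o.
    by rewrite eq_sym (negbTE z_o).
  have [-> | x_p1] /= := eqVneq x p1; first by rewrite (negbTE p1_z) (negbTE p1_A).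
  have [xBz | xBz] := boolP (x \in Bz); last by rewrite !andbF.
  by rewrite Bz_A // !andbT negb_or andbC.
rewrite !cardsU1 !inE (eq_sym o p1) (negbTE p1_o) (negbTE o_Bz) (negbTE p1_Bz) !andbF /=.
rewrite !cardsD1_in ?inE ?b_z // card_line // -!subn1 -!subnDA add1n add1n.
by rewrite subnSK ?subnSK ?subn0 //; apply: ltnW.
Qed.

Lemma weight_sum : \sum_p weight p = r * (r - 1) * k.
Proof.
have live_sum : \sum_p weight p = \sum_(p in ~: void) weight p.
  rewrite (bigID (mem void)) /= big1 ?add0n => [|p]; last by rewrite /weight => ->.
  by apply: eq_bigl => p; rewrite in_setC.
have balance : \sum_(p in ~: void) weight p + #|~: void :&: lowered| =
               k * #|~: void| + #|~: void :&: raised|.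
  rewrite -!sum_mem_card -big_split /= (eq_bigr (fun p => k + (p \in raised))) => [|p].
    by rewrite big_split /= sum_nat_const mulnC.
  by rewrite inE; apply: weight_lowered.
have card_live : #|~: void| = r ^ 2 - r.
  by have := cardsC void; rewrite card_void card_ord => e; rewrite -[in RHS]e addKn.
move: balance; rewrite live_sum card_live card_live_raised card_live_lowered.
by move: r_gt2; clear; nia.
Qed.

Lemma weight_spec :
  [/\ \sum_p weight p = r * (r - 1) * k,
      forall l, l \in L -> \sum_(p in l) weight p <= r * k - 1,
      forall p, 0 < weight p -> \sum_(q in par p V :\ p) weight q <= (r - 2) * k + 1
    & exists2 p, 0 < weight p & \sum_(q in par p V :\ p) weight q = (r - 2) * k + 1].
Proof.
split; [exact: weight_sum | exact: line_weight_le | | exists o].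
- move=> p; rewrite /weight; case: ifP => // p_live _.
  by apply: par_V_weight_le; rewrite p_live.
- by rewrite weight_o -subn1 subn_gt0 (leq_trans _ r_le_k) // ltnW.
- by rewrite par_id // V_weight.
Qed.

End Weighting.

Lemma exists_weighting k : 2 < r -> r <= k ->
  exists (w : point -> nat) (V : {set point}),
  [/\ V \in L, \sum_p w p = r * (r - 1) * k,
      forall l, l \in L -> \sum_(p in l) w p <= r * k - 1,
      forall p, 0 < w p -> \sum_(q in par p V :\ p) w q <= (r - 2) * k + 1
    & exists2 p, 0 < w p & \sum_(q in par p V :\ p) w q = (r - 2) * k + 1].
Proof.
move=> r_gt2 r_le_k.
have r2_gt0 : 0 < r ^ 2 by rewrite expn_gt0 (ltnW r_gt1).
pose o : point := Ordinal r2_gt0.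
have lines_o : 2 < #|[set l in L | o \in l]| by rewrite card_lines_through ltnS ltnW.
have [A [V [Y []]]] := exists_three_distinct lines_o.
rewrite !inE => /andP [A_line o_A] /and3P [V_A V_line o_V] /and4P [Y_V Y_A Y_line o_Y].
have A_V : A != V by rewrite eq_sym.
have A_Y : A != Y by rewrite eq_sym.
have V_Y : V != Y by rewrite eq_sym.
have [z [z_V z_o z_A]] := exists_point_off o r_gt2 V_line A_line V_A.
have [Az_line z_Az Az_A] := parP z A_line.
have Y_Az : Y != par z A.
  apply: contraNneq z_A => Y_Az.
  by rewrite -(parallel_eq Az_A (_ : o \in par z A) o_A) // -Y_Az.
have [p1 [p1_Y p1_o p1_Az]] := exists_point_off o r_gt2 Y_line Az_line Y_Az.
have [Ap_line _ Ap_A] := parP p1 A_line.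
have [p0 p0_Ap p0_V] : exists2 p0, p0 \in par p1 A & p0 \in V.
  apply: not_parallel_meet; apply: contra (meet_not_parallel A_V o_A o_V) => Ap_V.
  by apply: (parallel_trans A_line Ap_line V_line) => //; rewrite parallel_sym.
exists (weight k o z p1 p0 A Y), V; split=> //.
all: by case: (weight_spec r_gt2 r_le_k A_line V_line Y_line
  o_A o_V o_Y A_V A_Y V_Y z_V z_o p1_Y p1_o p1_Az p0_V p0_Ap).
Qed.

End AffinePlane.

Lemma exists_multiplier (n r : nat) : 2 < r ->
    r * (r - 1) * ((r - 1) * (r - 2) + 1) <= n -> r ^ 2 - r %| n ->
  exists2 k, n = r * (r - 1) * k & r <= k.
Proof.
move=> r_gt2 n_ge r2r_dvd; set k := n %/ (r * (r - 1)).
have r2r : r ^ 2 - r = r * (r - 1) by rewrite mulnBr muln1 expnS expn1.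
have n_eq : n = r * (r - 1) * k by rewrite mulnC divnK // -r2r.
exists k => //; move: n_ge; rewrite {1}n_eq leq_pmul2l; first by move: r_gt2; clear; nia.
by rewrite muln_gt0 subn_gt0 ltnW ?(ltnW r_gt2).
Qed.

Import GRing.Theory Num.Theory.
Local Open Scope ring_scope.

Lemma min_degree_formula (R : numFieldType) (r k : nat) : (2 < r)%N -> (0 < k)%N ->
  ((r * (r - 1) * k).-1 - ((r - 2) * k + 1))%:R =
    (1 - (r%:R - 2) / (r%:R ^+ 2 - r%:R)) * (r * (r - 1) * k)%:R - 2 :> R.
Proof.
move=> r_gt2 k_gt0.
have -> : ((r * (r - 1) * k).-1 - ((r - 2) * k + 1) = r * (r - 1) * k - ((r - 2) * k + 2))%N.
  by rewrite -subn1 -subnDA add1n -addnS.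
have le_n : ((r - 2) * k + 2 <= r * (r - 1) * k)%N by move: r_gt2 k_gt0; clear; nia.
rewrite natrB // natrD !natrM !natrB ?(ltnW (ltnW r_gt2)) ?(ltnW r_gt2) //.
have r2r_neq0 : r%:R ^+ 2 - r%:R != 0 :> R.
  have r_lt_r2 : (r < r ^ 2)%N by rewrite expnS expn1 ltn_Pmull // ltnW // ltnW.
  by rewrite -natrX -natrB ?(ltnW r_lt_r2) // pnatr_eq0 subn_eq0 -ltnNge.
by move: r2r_neq0; move: (r%:R : R) (k%:R : R) => x y x_neq0; field.
Qed.

Lemma mc_formula (R : numFieldType) (r k m : nat) : (1 < r)%N -> (0 < k)%N ->
  (m <= r * k - 1)%N -> m%:R < (r * (r - 1) * k)%:R / (r%:R - 1) :> R.
Proof.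
move=> r_gt1 k_gt0 m_le; have r1_neq0 : r%:R - 1 != 0 :> R.
  by rewrite subr_eq0 pnatr_eq1 gtn_eqF.
rewrite (_ : _ / _ = (r * k)%:R); last first.
  rewrite !natrM natrB ?(ltnW r_gt1) //.
  by move: r1_neq0; move: (r%:R : R) (k%:R : R) => x y x_neq0; field.
by rewrite ltr_nat (leq_ltn_trans m_le) // subn1 prednK ?muln_gt0 ?(ltnW r_gt1).
Qed.

Theorem theorem1p3 (n r : nat) :
  (3 <= r)%N ->
  (r * (r - 1) * ((r - 1) * (r - 2) + 1) <= n)%N ->
  (r ^ 2 - r %| n)%N ->
  affine_plane_exists r ->
  exists G : rel 'I_n,
    [/\ simple_graph G,
        (min_degree G)%:R = (1 - (r%:R - 2) / (r%:R ^+ 2 - r%:R)) * n%:R - 2 :> rat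
      & (mc r G)%:R < n%:R / (r%:R - 1) :> rat].
Proof.
move=> r_gt2 n_ge r2r_dvd [L [_ card_line unique_line]].
have r_gt1 : (1 < r)%N := ltnW r_gt2.
have [k -> r_le_k] := exists_multiplier r_gt2 n_ge r2r_dvd.
have k_gt0 : (0 < k)%N := leq_trans (ltnW r_gt1) r_le_k.
have [w [V [V_line w_sum w_line w_deg w_deg_eq]]] :=
  exists_weighting r_gt1 card_line unique_line r_gt2 r_le_k.
have [G [G_simple G_deg G_mc]] :=
  exists_blowup r_gt1 card_line unique_line V_line w_sum w_line w_deg w_deg_eq.
exists G; split=> //; first by rewrite G_deg min_degree_formula.
exact: mc_formula G_mc.
Qed.
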